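(* Let $p$ be a prime, let $(R,u)$ be a $\mathbb{Z}_p$-algebra with a filtration $u:R\to\mathbb{Z}\cup\{\infty\}$, and let $\sigma$ be an automorphism of $R$ such that the skew derivation $(\sigma,\sigma-\mathrm{id})$ is compatible with $u$. Suppose $u(p)\geq1$ and $\deg_u(\sigma-\mathrm{id})\geq1$. Then $\deg_u(\sigma^{p^n}-\mathrm{id})\geq n$ for all $n\in\mathbb{N}$.
   Context: A filtration $u$ satisfies $u(0)=\infty$, $u(x+y)\geq\min\{u(x),u(y)\}$, $u(xy)\geq u(x)+u(y)$, and is separated ($u(x)=\infty\iff x=0$). For an additive map $d:R\to R$, $\deg_u(d)=\inf_{x\neq0}\{u(d(x))-u(x)\}$. A skew derivation $(\sigma,\delta)$ ($\sigma$ automorphism, $\delta(ab)=\delta(a)b+\sigma(a)\delta(b)$) is compatible with $u$ if $\deg_u(\sigma-\mathrm{id})>0$ and $\deg_u(\delta)>0$. *)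

From mathcomp Require Import all_boot all_order all_algebra.
From mathcomp Require Import all_classical all_reals.
From mathcomp Require Import ereal.
Set Implicit Arguments. Unset Strict Implicit. Unset Printing Implicit Defensive.
Import Order.TTheory GRing.Theory Num.Theory.
Local Open Scope ring_scope.
Local Open Scope ereal_scope.
Local Open Scope classical_set_scope.

(* Values in Z ∪ {∞} are modelled by \bar int (never -oo). *)

Definition filtration (R : pzRingType) (u : R -> \bar int) : Prop :=
  [/\ forall x, u x != -oo,
      u 0%R = +oo,
      forall x y, Order.min (u x) (u y) <= u (x + y)%R,
      forall x y, u x + u y <= u (x * y)%R
    & forall x, u x = +oo <-> x = 0%R].

(* embedding Z ∪ {±∞} into Q ∪ {±∞} (to take infima in a complete order) *)
Definition ext_int_to_rat (z : \bar int) : \bar rat :=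
  match z with
  | EFin r => EFin (r%:~R)
  | +oo => +oo
  | -oo => -oo
  end.

Definition deg_u (R : pzRingType) (u : R -> \bar int) (d : R -> R) : \bar rat :=
  ereal_inf [set ext_int_to_rat (u (d x)) - ext_int_to_rat (u x) | x in [set x : R | x != 0%R]].

Definition ring_automorphism (R : pzRingType) (s : R -> R) : Prop :=
  [/\ forall x y : R, s (x + y)%R = (s x + s y)%R,
      forall x y : R, s (x * y)%R = (s x * s y)%R,
      s 1%R = 1%R
    & bijective s].

Definition skew_derivation (R : pzRingType) (s d : R -> R) : Prop :=
  ring_automorphism s /\
  (forall x y : R, d (x + y)%R = (d x + d y)%R) /\
  (forall a b : R, d (a * b)%R = (d a * b + s a * d b)%R).

Definition compatible (R : pzRingType) (u : R -> \bar int) (s d : R -> R) : Prop :=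
  0 < deg_u u (fun x => s x - x)%R /\ 0 < deg_u u d.

From mathcomp Require Import all_boot all_order all_algebra.
From mathcomp Require Import all_classical all_reals.
From mathcomp Require Import ereal.
From mathcomp Require Import zify.
Set Implicit Arguments.
Unset Strict Implicit.
Unset Printing Implicit Defensive.

Import Order.TTheory GRing.Theory Num.Theory.
Local Open Scope ring_scope.

(* Put D := σ - id and say that f has degree at least c when u (f x) >= u x + c
   for all x. If D has degree at least c >= 1, additivity gives
   σ^j x - x = j D x + e_j with e_{j+1} - e_j = D (σ^j x - x), so every e_j has
   level u x + 2c; hence σ^p x - x = p D x + e_p has degree at least c + 1, as
   u p >= 1. Induction on n with σ^(p^(n+1)) = (σ^(p^n))^p gives degree n + 1. *)

Lemma int_has_max (P : int -> Prop) (k0 b : int) :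
  P k0 -> (forall k, P k -> k <= b) -> exists2 m, P m & forall k, P k -> k <= m.
Proof.
move=> Pk0 Pb; pose Q m := `[< P (k0 + m%:Z)%R >].
have exQ : exists m, Q m by exists 0%N; apply/asboolP; rewrite addr0.
have Q_bounded m : Q m -> (m <= absz (b - k0))%N.
  by move=> /asboolP/Pb; lia.
have [m /asboolP Pm m_max] := ex_maxnP exQ Q_bounded.
exists (k0 + m%:Z)%R => // k Pk.
have [k_lt_k0|k0_le_k] := ltP k k0; first lia.
have /m_max : Q (absz (k - k0)).
  by apply/asboolP; rewrite gez0_abs ?subr_ge0 // subrKC.
lia.
Qed.

Lemma morphB_of_morphD (V W : zmodType) (f : V -> W) :
  {morph f : x y / x + y} -> {morph f : x y / x - y}.
Proof. by move=> fD x y; apply: (addIr (f y)); rewrite -fD !subrK. Qed.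

Lemma morph0_of_morphD (V W : zmodType) (f : V -> W) :
  {morph f : x y / x + y} -> f 0 = 0.
Proof. by move=> /morphB_of_morphD fB; rewrite -(subrr 0) fB subrr. Qed.

Lemma iter_morphD (V : zmodType) (f : V -> V) n :
  {morph f : x y / x + y} -> {morph iter n f : x y / x + y}.
Proof. by move=> fD x y; elim: n => //= n ->; rewrite fD. Qed.

Local Open Scope ereal_scope.

(* On \bar rat a supremum need not exist, and ereal_sup then returns the junk
   value -oo; integrality of the finite elements guarantees existence. *)
Lemma ereal_sup_ubound_int (A : set (\bar rat)) :
  (forall y, A y -> y = -oo \/ exists k : int, y = (k%:~R)%:E) ->
  ubound A (ereal_sup A).
Proof.
move=> A_int.
suff [s A_s] : exists s, supremums A s.
  rewrite /ereal_sup /supremum; case: ifPn => [/eqP -> _ []//|_].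
  by case: (xgetPex -oo (ex_intro _ s A_s)) => ub _.
have [[k0 Ak0]|noint] := pselect (exists k : int, A (k%:~R)%:E); last first.
  exists -oo; split=> [y /[dup] Ay /A_int [->//|[k yk]]|y _]; last exact: leNye.
  by exfalso; apply: noint; exists k; rewrite -yk.
have [[b Ab]|unbounded] := pselect (exists b : rat, ubound A b%:E); last first.
  exists +oo; split=> [y _|]; first exact: leey.
  move=> [b|//|] Ab; first by exfalso; apply: unbounded; exists b.
  by have := Ab _ Ak0.
have [m Am m_max] : exists2 m, A (m%:~R)%:E & forall k, A (k%:~R)%:E -> (k <= m)%R.
  apply: (int_has_max (b := Num.ceil b) Ak0) => k /Ab.
  by rewrite lee_fin => /le_ceil; rewrite intrKceil.
exists (m%:~R)%:E; split=> [y /[dup] Ay /A_int [->|[k yk]]|z Az]; last exact: Az.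
- exact: leNye.
- by rewrite yk lee_fin ler_int m_max // -yk.
Qed.

Lemma ereal_inf_lbound_int (A : set (\bar rat)) :
  (forall y, A y -> y = +oo \/ exists k : int, y = (k%:~R)%:E) ->
  lbound A (ereal_inf A).
Proof.
move=> A_int y Ay; rewrite /ereal_inf leeNl; apply: ereal_sup_ubound_int; last by exists y.
move=> _ [z /A_int [->|[k ->]] <-]; first by left.
by right; exists (- k)%R; rewrite intrN EFinN.
Qed.

Lemma lee_ext_int_to_ratBr (z : \bar int) (t c : int) :
  ((c%:~R)%:E <= ext_int_to_rat z - (t%:~R)%:E) = ((t + c)%:E <= z).
Proof.
case: z => [w||] /=; rewrite ?leey ?leNye //.
by rewrite -EFinB !lee_fin lerBrDl -intrD ler_int.
Qed.

Section Filtration.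
Variables (R : pzRingType) (u : R -> \bar int).
Hypothesis u_filt : filtration u.

Definition deg_ge (f : R -> R) (c : int) :=
  forall x (r : int), r%:E <= u x -> (r + c)%:E <= u (f x).

Lemma le_u0 (r : int) : r%:E <= u 0%R.
Proof. by case: u_filt => _ -> _ _ _; rewrite leey. Qed.

Lemma le_uD (r : int) a b : r%:E <= u a -> r%:E <= u b -> r%:E <= u (a + b)%R.
Proof.
case: u_filt => _ _ u_min _ _ ua ub; apply: le_trans (u_min a b).
by rewrite le_min ua ub.
Qed.

Lemma le_uMn (r : int) a j : r%:E <= u a -> r%:E <= u (a *+ j)%R.
Proof.
move=> ua; elim: j => [|j IH]; first by rewrite mulr0n le_u0.
by rewrite mulrS le_uD.
Qed.

Lemma le_uM (r s : int) a b : r%:E <= u a -> s%:E <= u b -> (r + s)%:E <= u (a * b)%R.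
Proof.
case: u_filt => _ _ _ u_mul _ ua ub; apply: le_trans (u_mul a b).
by rewrite EFinD leeD.
Qed.

Lemma u_neq_ninfty x : u x != -oo.
Proof. by case: u_filt. Qed.

Lemma u_fin (x : R) : x != 0%R -> exists t : int, u x = t%:E.
Proof.
case: u_filt => _ _ _ _ u_inf x_neq0.
case ux: (u x) => [t||]; first by exists t.
  by move/u_inf: ux x_neq0 => ->; rewrite eqxx.
by have := u_neq_ninfty x; rewrite ux.
Qed.

Lemma deg_geP (d : R -> R) {c : int} :
  d 0%R = 0%R -> deg_ge d c <-> (c%:~R)%:E <= deg_u u d.
Proof.
move=> d0; split=> [d_ge|deg_ge_c x r ux].
  apply: le_ereal_inf_tmp => _ [x /= x_neq0 <-].
  have [t ut] := u_fin x_neq0; rewrite ut lee_ext_int_to_ratBr.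
  by apply: d_ge; rewrite ut.
have [->|x_neq0] := eqVneq x 0%R; first by rewrite d0 le_u0.
have [t ut] := u_fin x_neq0; rewrite ut lee_fin in ux.
have deg_le : deg_u u d <= ext_int_to_rat (u (d x)) - ext_int_to_rat (u x).
  apply: ereal_inf_lbound_int; last by exists x.
  move=> _ [z /= z_neq0 <-]; have [s -> /=] := u_fin z_neq0.
  case: (u (d z)) (u_neq_ninfty (d z)) => [w||] //= _; last by left.
  by right; exists (w - s)%R; rewrite intrB EFinB.
have := le_trans deg_ge_c deg_le; rewrite ut lee_ext_int_to_ratBr.
by apply: le_trans; rewrite lee_fin lerD2r.
Qed.

Section IterateOfAdditive.
Variable S : R -> R.
Hypothesis S_add : {morph S : x y / (x + y)%R}.

Let D x := (S x - x)%R.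

Lemma deg_ge_iter_sub_id_mul (c : int) x (r : int) j :
  (0 <= c)%R -> deg_ge D c -> r%:E <= u x ->
  (r + c + c)%:E <= u (iter j S x - x - D x *+ j)%R.
Proof.
move=> c_ge0 D_ge ux; elim: j => [|j IH]; first by rewrite subrr mulr0n subr0 le_u0.
set y := iter j S x.
have uyx : (r + c)%:E <= u (y - x)%R.
  rewrite -[(y - x)%R](subrK (D x *+ j)%R); apply: le_uD; last exact/le_uMn/D_ge.
  by apply: le_trans IH; rewrite lee_fin lerDl.
have -> : (iter j.+1 S x - x - D x *+ j.+1 = (y - x - D x *+ j) + D (y - x))%R.
  rewrite /D /= -/y (morphB_of_morphD S_add) mulrSr [(_ *+ j + _)%R]addrC.
  rewrite opprD addrA opprB subrKA.
  by rewrite [RHS]addrC addrA subrK.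
by apply: le_uD => //; apply: D_ge.
Qed.

Lemma deg_ge_iter_sub_id_succ (p : nat) (c : int) : 1%:E <= u p%:R -> (1 <= c)%R ->
  deg_ge D c -> deg_ge (fun x => iter p S x - x)%R (c + 1).
Proof.
move=> up c_ge1 D_ge x r ux.
have -> : (iter p S x - x = p%:R * D x + (iter p S x - x - D x *+ p))%R.
  by rewrite mulr_natl subrKC.
apply: le_uD; first by rewrite addrA addrC; apply: le_uM => //; apply: D_ge.
have c_ge0 : (0 <= c)%R by apply: le_trans c_ge1.
apply: le_trans (deg_ge_iter_sub_id_mul p c_ge0 D_ge ux).
by rewrite lee_fin -addrA !lerD2l.
Qed.

End IterateOfAdditive.

Lemma deg_ge_iter_pexp_sub_id (S : R -> R) (p n : nat) :
  {morph S : x y / (x + y)%R} -> 1%:E <= u p%:R ->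
  deg_ge (fun x => S x - x)%R 1 -> deg_ge (fun x => iter (p ^ n) S x - x)%R n.+1.
Proof.
move=> S_add up D_ge; elim: n => [|n IH]; first by rewrite expn0.
have step := deg_ge_iter_sub_id_succ (iter_morphD (p ^ n) S_add) up _ IH.
by move=> x r ux; rewrite expnS iterM -addn1 PoszD; apply: step.
Qed.

End Filtration.

Theorem lemma1p2p5 (p : nat) (R : pzRingType) (u : R -> \bar int) (s : R -> R) :
  prime p ->
  filtration u ->
  ring_automorphism s ->
  skew_derivation s (fun x => s x - x)%R ->
  compatible u s (fun x => s x - x)%R ->
  1%:E <= u (p%:R)%R ->
  1%:E <= deg_u u (fun x => s x - x)%R ->
  forall n : nat, (n%:R)%:E <= deg_u u (fun x => iter (p ^ n) s x - x)%R.
Proof.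
move=> _ u_filt [s_add _ _ _] _ _ up deg_ge1 n.
have sub_id0 k : (iter k s 0 - 0 = 0)%R.
  by rewrite (morph0_of_morphD (iter_morphD k s_add)) subrr.
have /(deg_geP u_filt (sub_id0 _)) : deg_ge u (fun x => iter (p ^ n) s x - x)%R n.+1.
  by apply: deg_ge_iter_pexp_sub_id => //; apply/(deg_geP u_filt (sub_id0 1%N)).
by apply: le_trans; rewrite lee_fin ler_nat.
Qed.
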